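(* Let $n\geq 1$ and let $x=(x_1,\dots,x_n)\in B^n$ be such that every iterate $S^jx$, $j\geq0$, has strictly positive last coordinate and the expansion is eventually periodic: $S^{m+p}x=S^mx$ for some $m\geq0$, $p\geq1$. Let $k_j:=\lfloor 1/(S^{j-1}x)_n\rfloor$ and let the periodicity matrix be $\beta^{(p)}:=\beta(k_{m+1})\cdots\beta(k_{m+p})$. Let $\rho_0$ be the largest eigenvalue of $\beta^{(p)}$ (its spectral radius, a real positive eigenvalue since $\beta^{(p)}$ has nonnegative entries). Then $x_1,\dots,x_n$ are rational functions with rational coefficients of $\rho_0$; consequently $x_1,\dots,x_n$ lie in the number field $\mathbb{Q}(\rho_0)$, whose degree is at most $n+1$.
   Context: $B^n:=\{(x_1,\dots,x_n)\in\mathbb{R}^n:1\geq x_1\geq\dots\geq x_n\geq0\}$. The multiplicative Selmer algorithm is the map, defined for $x\in B^n$ with $x_n>0$, $S(x_1,\dots,x_n)=\left(\frac{x_2}{x_1},\dots,\frac{x_n}{x_1},\frac{1-kx_n}{x_1}\right)$ with $k=\lfloor x_n^{-1}\rfloor$. For $k\in\mathbb{N}$, $\beta(k)$ is the $(n+1)\times(n+1)$ integer matrix (indices $0,\dots,n$) with entries $\beta(k)_{0,n-1}=k$, $\beta(k)_{0,n}=1$, $\beta(k)_{i,i-1}=1$ for $1\leq i\leq n$, and all other entries $0$. *)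

From HB Require Import structures.
From mathcomp Require Import all_boot all_order all_algebra.
From mathcomp Require Import reals.
From mathcomp Require Import complex.
Set Implicit Arguments. Unset Strict Implicit. Unset Printing Implicit Defensive.
Import Order.TTheory GRing.Theory Num.Theory.
Local Open Scope ring_scope.

Section Selmer.
Variables (R : realType) (n : nat).

(* 1-based coordinate access: [selcoord x i] is x_i for 1 <= i <= n, 0 otherwise. *)
Definition selcoord (x : 'rV[R]_n) (i : nat) : R :=
  if i is i'.+1 then (if insub i' is Some j then x 0 j else 0) else 0.

Definition inB (x : 'rV[R]_n) : Prop :=
  selcoord x 1 <= 1 /\ (forall i : nat, (1 <= i < n)%N -> selcoord x i.+1 <= selcoord x i)
  /\ 0 <= selcoord x n.

Definition selk (x : 'rV[R]_n) : nat := Num.truncn (1 / selcoord x n).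

Definition selmer (x : 'rV[R]_n) : 'rV[R]_n :=
  \row_(j < n) (if (j.+1 < n)%N then selcoord x j.+2 / selcoord x 1
                else (1 - (selk x)%:R * selcoord x n) / selcoord x 1).

Definition beta (k : nat) : 'M[R]_n.+1 :=
  \matrix_(i < n.+1, j < n.+1)
    (if (i == 0%N :> nat) && (j == n.-1 :> nat) then k%:R
     else if (i == 0%N :> nat) && (j == n :> nat) then 1
     else if (i == j.+1 :> nat) then 1 else 0).

End Selmer.

From HB Require Import structures.
From mathcomp Require Import all_boot all_order all_algebra.
From mathcomp Require Import reals.
From mathcomp Require Import complex.
From mathcomp Require Import zify ring lra.
Import Order.TTheory GRing.Theory Num.Theory.
Local Open Scope ring_scope.

(* Write [hcoord x] for the column (1, x_1, ..., x_n).  One Selmer step reads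
   [hcoord x = x_1 * beta(k_1) * hcoord (S x)], so at the periodic point
   [w := hcoord (S^m x)] is a positive eigenvector of the nonnegative matrix
   [beta^(p)]; a positive eigenvector carries the spectral radius, so its
   eigenvalue is [rho0].  The zero pattern of [beta(k)] (a cycle with a chord)
   forbids nonzero nonnegative eigenvectors with a zero entry, and Perron's
   argument then makes the [rho0]-eigenspace the line through [w].  Cramer's rule
   for [rho0 - beta^(p)], with one dependent row replaced by [e_0], expresses [w],
   hence also [hcoord x] (a multiple of a rational matrix times [w]), through
   polynomials in [rho0] over [Q].  Finally [rho0] is a root of the characteristic
   polynomial of the rational matrix [beta^(p)], of degree [n + 1]. *)

Set Implicit Arguments. Unset Strict Implicit. Unset Printing Implicit Defensive.

Lemma mem_iter_imset (T : finType) (g : T -> T) t (A : {set T}) i :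
  injective g -> (iter t g i \in iter t (fun B : {set T} => g @: B) A) = (i \in A).
Proof. by move=> g_inj; elim: t => [|t IH] //=; rewrite mem_imset. Qed.

Section CyclicShift.
Variable N : nat.
Local Notation f := (@ord_pred N.+1).

Lemma val_ord_pred (i : 'I_N.+1) : val (f i) = if val i == 0%N then N else (val i).-1.
Proof.
rewrite /=; case: ifP => [/eqP -> | /negbT i_neq0]; first by rewrite add0n modn_small.
have -> : (i + N.+1).-1 = i.-1 + N.+1 by move: i_neq0; rewrite -lt0n; lia.
by rewrite modnDr modn_small // (leq_ltn_trans (leq_pred _)).
Qed.

Lemma ord_pred0 : f ord0 = ord_max.
Proof. by apply/val_inj; rewrite val_ord_pred. Qed.

Lemma val_iter_ord_pred t (i : 'I_N.+1) : (t <= i)%N -> val (iter t f i) = (i - t)%N.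
Proof.
elim: t => [|t IH] t_le; first by rewrite subn0.
rewrite iterS val_ord_pred IH ?(ltnW t_le) // subn_eq0 leqNgt t_le.
by rewrite subnS.
Qed.

(* The cardinalities are nondecreasing and periodic, hence [Z t.+1 = f @: Z t]; the
   wrap condition then makes [Z 0] stable under the cyclic permutation [f]. *)
Lemma cyclic_sets_full (Z : nat -> {set 'I_N.+1}) p :
  (0 < p)%N -> (forall t, Z (t + p)%N = Z t) ->
  (forall t, f @: Z t \subset Z t.+1) ->
  (forall t, ord0 \in Z t -> f ord_max \in Z t.+1) ->
  Z 0%N != set0 -> Z 0%N = setT.
Proof.
move=> p_gt0 Z_per Z_sub Z_wrap /set0Pn [i0 i0Z].
have card_mono t s : (#|Z t| <= #|Z (t + s)|)%N.
  elim: s => [|s IH]; first by rewrite addn0.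
  apply: leq_trans IH _; rewrite addnS -(card_imset _ (@ord_pred_inj _)).
  exact/subset_leq_card/Z_sub.
have Z_succ t : Z t.+1 = f @: Z t.
  apply/esym/eqP; rewrite eqEcard Z_sub card_imset; last exact: ord_pred_inj.
  by rewrite -(Z_per t) -(prednK p_gt0) addnS -addSn card_mono.
have Z_iter t : Z t = iter t (fun B : {set _} => f @: B) (Z 0%N).
  by elim: t => [|t IH] //=; rewrite Z_succ IH.
have Z_max t : ord0 \in Z t -> ord_max \in Z t.
  by move/Z_wrap; rewrite Z_succ mem_imset //; exact: ord_pred_inj.
have Z_closed i : i \in Z 0%N -> f i \in Z 0%N.
  move=> iZ; have i_to0 : iter i f i = ord0.
    by apply/val_inj; rewrite val_iter_ord_pred // subnn.
  have : iter i f i \in Z i by rewrite Z_iter (mem_iter_imset _ _ _ (@ord_pred_inj _)).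
  rewrite i_to0 => /Z_max; rewrite -ord_pred0 -i_to0 -iterS iterSr.
  by rewrite Z_iter (mem_iter_imset _ _ _ (@ord_pred_inj _)).
have Z_iter_closed t i : i \in Z 0%N -> iter t f i \in Z 0%N.
  by move=> iZ; elim: t => [|t IH] //=; exact: Z_closed.
apply/setP => j; rewrite inE.
have maxZ : ord_max \in Z 0%N.
  rewrite -ord_pred0; apply: Z_closed.
  have <- : iter i0 f i0 = ord0 by apply/val_inj; rewrite val_iter_ord_pred // subnn.
  exact: Z_iter_closed.
have -> : j = iter (N - j) f ord_max.
  by apply/val_inj; rewrite val_iter_ord_pred /= ?subKn ?leq_subr // -ltnS.
exact: Z_iter_closed.
Qed.

End CyclicShift.

Lemma eigenvalue_trmx (F : fieldType) N (A : 'M[F]_N) a :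
  eigenvalue A^T a = eigenvalue A a.
Proof.
rewrite /eigenvalue /eigenspace !kermx_eq0 !row_free_unit.
have -> : A^T - a%:M = (A - a%:M)^T by rewrite linearB /= tr_scalar_mx.
by rewrite unitmx_tr.
Qed.

Lemma rV_neq0_entry (V : zmodType) N (z : 'rV[V]_N) : z != 0 -> exists j, z 0 j != 0.
Proof.
move=> z_neq0; apply/existsP; apply: contraR z_neq0 => /existsPn z0.
by apply/eqP/rowP => j; rewrite mxE; apply/eqP/negPn/z0.
Qed.

Lemma scale_first_coord1 (F : fieldType) N (u v : 'cV[F]_N.+1) c :
  v = c *: u -> v ord0 0 = 1 -> u ord0 0 != 0 /\ v = (u ord0 0)^-1 *: u.
Proof.
move=> -> v01; have u0 : u ord0 0 != 0.
  by apply: contra_eq_neq v01 => u00; rewrite mxE u00 mulr0 eq_sym oner_eq0.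
split=> //; congr (_ *: _); apply: (mulIf u0).
by rewrite mulVf // -v01 mxE.
Qed.

Section NonnegativeMatrices.
Variable R : realFieldType.

Definition nonnegmx m n (A : 'M[R]_(m, n)) := forall i j, 0 <= A i j.

Lemma nonnegmx_mul m n q (A : 'M[R]_(m, n)) (B : 'M[R]_(n, q)) :
  nonnegmx A -> nonnegmx B -> nonnegmx (A *m B).
Proof. by move=> A_ge0 B_ge0 i j; rewrite mxE sumr_ge0 // => k _; apply: mulr_ge0. Qed.

Lemma nonnegmx_prod N I (r : seq I) (P : pred I) (F : I -> 'M[R]_N.+1) :
  (forall j, P j -> nonnegmx (F j)) -> nonnegmx (\prod_(j <- r | P j) F j).
Proof.
move=> F_ge0; apply: big_ind => //; last exact: nonnegmx_mul.
by move=> i j; rewrite mxE ler0n.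
Qed.

Definition zero_set N (v : 'cV[R]_N) := [set i | v i 0 == 0].

Lemma zero_setZ N (c : R) (v : 'cV[R]_N) : c != 0 -> zero_set (c *: v) = zero_set v.
Proof. by move=> c_neq0; apply/setP => i; rewrite !inE mxE mulf_eq0 (negbTE c_neq0). Qed.

(* Weighting the left eigenvector by the positive right eigenvector [w] and
   using the nonnegativity of [A] bounds every left eigenvalue by [lam]. *)
Lemma left_eigenvalue_norm_le N (A : 'M[R]_N) (w : 'cV[R]_N) (z : 'rV[R]_N) lam mu :
  nonnegmx A -> (forall i, 0 < w i 0) -> A *m w = lam *: w ->
  z != 0 -> z *m A = mu *: z -> `|mu| <= lam.
Proof.
move=> A_ge0 w_gt0 w_eig z_neq0 z_eig.
pose T := \sum_j `|z 0 j| * w j 0.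
have T_gt0 : 0 < T.
  have [j zj_neq0] := rV_neq0_entry z_neq0.
  rewrite /T (bigD1 j) //= ltr_pwDl ?mulr_gt0 ?normr_gt0 //.
  by rewrite sumr_ge0 // => k _; rewrite mulr_ge0 // ltW.
have lhsE : `|mu| * T = \sum_j `|\sum_i z 0 i * A i j| * w j 0.
  rewrite mulr_sumr; apply: eq_bigr => j _.
  have := congr1 (fun M : 'rV[R]_N => M 0 j) z_eig; rewrite !mxE => ->.
  by rewrite mulrA normrM.
have rhsE : lam * T = \sum_j \sum_i `|z 0 i| * A i j * w j 0.
  rewrite exchange_big mulr_sumr; apply: eq_bigr => i _.
  have := congr1 (fun M : 'cV[R]_N => M i 0) w_eig; rewrite !mxE mulrCA => <-.
  by rewrite mulr_sumr; apply: eq_bigr => j _; rewrite mulrA.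
rewrite -(ler_pM2r T_gt0) lhsE rhsE ler_sum // => j _.
rewrite -mulr_suml ler_wpM2r ?(ltW (w_gt0 j)) //.
apply: le_trans (ler_norm_sum _ _ _) _.
by rewrite ler_sum // => i _; rewrite normrM (ger0_norm (A_ge0 i j)).
Qed.

End NonnegativeMatrices.

Lemma positive_eigenvalue_eq_spectral_radius (R : rcfType) N (A : 'M[R]_N.+1)
    (w : 'cV[R]_N.+1) lam rho :
  nonnegmx A -> (forall i, 0 < w i 0) -> A *m w = lam *: w ->
  eigenvalue A rho ->
  (forall mu : R[i], eigenvalue (map_mx (fun r : R => r%:C%C) A) mu -> `|mu| <= rho%:C%C) ->
  rho = lam.
Proof.
move=> A_ge0 w_gt0 w_eig /eigenvalueP [z z_eig z_neq0] rho_max.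
have rho_le : `|rho| <= lam by exact: left_eigenvalue_norm_le z_eig.
have lam_eig : eigenvalue A lam.
  rewrite -eigenvalue_trmx; apply/eigenvalueP; exists w^T.
    by rewrite -trmx_mul w_eig linearZ.
  apply: contraTneq (w_gt0 ord0) => /rowP /(_ ord0).
  by rewrite !mxE => ->; rewrite ltxx.
have := rho_max lam%:C%C; rewrite eigenvalue_map => /(_ lam_eig).
rewrite ger0_norm ?ler0c ?(le_trans (normr_ge0 rho) rho_le) // lecR => lam_le.
by apply/eqP; rewrite eq_le lam_le (le_trans (ler_norm rho) rho_le).
Qed.

Section HornerEvaluation.
Variables (F R : fieldType) (f : {rmorphism F -> R}) (rho : R).

Local Notation ev := (fun p : {poly F} => (map_poly f p).[rho]).

Let rho_comm : commr_rmorph f rho.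
Proof. by move=> a; exact: mulrC. Qed.

Local Notation phi := (horner_morph rho_comm).

Lemma mul_map_mx_horner k N (M : 'M[F]_(k, N)) (P : 'cV[{poly F}]_N) :
  map_mx f M *m map_mx ev P = map_mx ev (map_mx polyC M *m P).
Proof.
rewrite (map_mxM phi); congr (_ *m _); apply/matrixP => i j.
by rewrite !mxE; apply/esym/horner_morphC.
Qed.

Section RationalEigenvector.
Variables (N : nat) (A : 'M[F]_N.+1) (w : 'cV[R]_N.+1).
Hypothesis rho_eig : eigenvalue (map_mx f A) rho.
Hypothesis w_eig : map_mx f A *m w = rho *: w.
Hypothesis w0 : w ord0 0 = 1.
Hypothesis eigenspace_line : forall v, map_mx f A *m v = rho *: v -> v = v ord0 0 *: w.

(* Cramer's rule for [rho - A] with one dependent row replaced by [e_0]. *)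
Lemma eigenvector_poly_eigenvalue :
  exists P : 'cV[{poly F}]_N.+1,
    ev (P ord0 0) != 0 /\ w = (ev (P ord0 0))^-1 *: map_mx ev P.
Proof.
have [z z_eig z_neq0] := eigenvalueP rho_eig.
have [r zr_neq0] := rV_neq0_entry z_neq0.
pose B := rho%:M - map_mx f A.
pose C : 'M[{poly F}]_N.+1 :=
  \matrix_(i, j) if i == r then (j == ord0)%:R else char_poly_mx A i j.
pose e : 'cV[{poly F}]_N.+1 := \col_i (i == r)%:R.
have Cv_r (v : 'cV[R]_N.+1) : (map_mx phi C *m v) r 0 = v ord0 0.
  rewrite mxE (bigD1 ord0) //= big1 ?addr0 => [|j j_neq0]; rewrite !mxE !eqxx.
    by rewrite rmorph1 mul1r.
  by rewrite (negbTE j_neq0) rmorph0 mul0r.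
have Cv i (v : 'cV[R]_N.+1) : i != r -> (map_mx phi C *m v) i 0 = (B *m v) i 0.
  move=> i_neq_r; rewrite !mxE; apply: eq_bigr => j _.
  rewrite !mxE (negbTE i_neq_r) rmorphB /= rmorphMn /=.
  by rewrite [phi 'X]horner_morphX [phi _%:P]horner_morphC.
have Bw : B *m w = 0 by rewrite mulmxBl mul_scalar_mx w_eig subrr.
have zB : z *m B = 0 by rewrite mulmxBr mul_mx_scalar z_eig subrr.
have Cw : map_mx phi C *m w = map_mx phi e.
  apply/colP => i; have [->|i_neq_r] := eqVneq i r.
    by rewrite Cv_r w0 !mxE eqxx rmorph1.
  by rewrite Cv // Bw !mxE (negbTE i_neq_r) rmorph0.
have C_inj (v : 'cV[R]_N.+1) : map_mx phi C *m v = 0 -> v = 0.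
  move=> Cv0; have v0 : v ord0 0 = 0 by rewrite -Cv_r Cv0 mxE.
  have Bv_off i : i != r -> (B *m v) i 0 = 0 by move=> i_neq_r; rewrite -Cv // Cv0 mxE.
  have Bv : B *m v = 0.
    apply/colP => i; rewrite [RHS]mxE; have [->|] := eqVneq i r; last exact: Bv_off.
    have : (z *m (B *m v)) 0 0 = 0 by rewrite mulmxA zB mul0mx mxE.
    rewrite mxE (bigD1 r) //= big1 ?addr0 => [/eqP|k k_neq_r]; last by rewrite Bv_off ?mulr0.
    by rewrite mulf_eq0 (negbTE zr_neq0) => /eqP.
  have v_eig : map_mx f A *m v = rho *: v.
    by apply/eqP; rewrite eq_sym -subr_eq0 -mul_scalar_mx -mulmxBl Bv.
  by rewrite (eigenspace_line v_eig) v0 scale0r.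
have detC : phi (\det C) != 0.
  have -> : phi (\det C) = \det (map_mx phi C)^T by rewrite det_tr (det_map_mx phi).
  apply/negP => /det0P [v v_neq0 vC].
  move/eqP: v_neq0; apply; apply: trmx_inj; rewrite trmx0; apply: C_inj.
  by rewrite -[LHS]trmxK trmx_mul trmxK vC trmx0.
have adjCw : phi (\det C) *: w = map_mx phi (\adj C *m e).
  by rewrite map_mxM map_mx_adj -Cw mulmxA mul_adj_mx det_map_mx mul_scalar_mx.
exists (\adj C *m e).
have [P0 wP] : (map_mx phi (\adj C *m e)) ord0 0 != 0 /\
    w = ((map_mx phi (\adj C *m e)) ord0 0)^-1 *: map_mx phi (\adj C *m e).
  by apply: (scale_first_coord1 (c := (phi (\det C))^-1)); rewrite -?adjCw ?scalerA ?mulVf ?scale1r.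
by move: P0 wP; rewrite mxE.
Qed.

End RationalEigenvector.

End HornerEvaluation.

Section BetaMatrices.
Variables (R : realType) (n : nat).
Hypothesis n_gt0 : (0 < n)%N.

Local Notation beta := (@beta R n).
Local Notation f := (@ord_pred n.+1).

Lemma beta_mulE k (v : 'cV[R]_n.+1) (i : 'I_n.+1) :
  (beta k *m v) i 0 = if (i == 0%N :> nat) then k%:R * v (inord n.-1) 0 + v ord_max 0
                      else v (inord i.-1) 0.
Proof.
rewrite mxE.
have n1_lt : (n.-1 < n.+1)%N by rewrite prednK // ltnW.
have n1_neq_max : (inord n.-1 : 'I_n.+1) != ord_max.
  apply/negP => /eqP/(congr1 val); rewrite /= inordK //; move: n_gt0; lia.
case: ifP => [/eqP i0 | i0].
  rewrite (bigD1 (inord n.-1)) //= (bigD1 ord_max) /=; last by rewrite eq_sym.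
  rewrite big1 ?addr0.
    rewrite !mxE i0 inordK //= eqxx /= ifF //; last first.
      by apply/negbTE/eqP; move: n_gt0; lia.
    by rewrite eqxx mul1r.
  move=> j /andP [j_neq_n1 j_neq_max]; rewrite !mxE i0 /=.
  have -> : (j == n.-1 :> nat) = false.
    by apply/negbTE; apply: contra j_neq_n1 => /eqP jE; apply/eqP/val_inj; rewrite /= inordK.
  have -> : (j == n :> nat) = false.
    by apply/negbTE; apply: contra j_neq_max => /eqP jE; apply/eqP/val_inj.
  by rewrite mul0r.
have i1_lt : (i.-1 < n.+1)%N by rewrite (leq_ltn_trans (leq_pred _)).
rewrite (bigD1 (inord i.-1)) //= big1 ?addr0.
  rewrite !mxE i0 /= inordK // prednK ?eqxx ?mul1r //.
  by rewrite lt0n; apply/negbT.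
move=> j j_neq; rewrite !mxE i0 /=.
case: eqP => [ij|]; last by rewrite mul0r.
by case/negP: j_neq; apply/eqP/val_inj; rewrite /= inordK // ij.
Qed.

Lemma beta_ge0 k : nonnegmx (beta k).
Proof. by move=> i j; rewrite mxE; do 3 (case: ifP => _ //); rewrite ler0n. Qed.

(* Entry [i] of [beta k *m v] reads [v] at [f i] (and, for [i = 0], also at
   [n - 1] = [f ord_max]), with positive weights. *)
Lemma beta_zero_set k (v : 'cV[R]_n.+1) : (0 < k)%N -> nonnegmx v ->
  f @: zero_set (beta k *m v) \subset zero_set v /\
  (ord0 \in zero_set (beta k *m v) -> f ord_max \in zero_set v).
Proof.
move=> k_gt0 v_ge0.
have f_max : f ord_max = inord n.-1.
  by apply/val_inj; rewrite val_ord_pred /= inordK ?ifF //; move: n_gt0; lia.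
have v_at0 : (beta k *m v) ord0 0 = 0 -> v (inord n.-1) 0 = 0 /\ v ord_max 0 = 0.
  rewrite beta_mulE /= => /eqP; rewrite paddr_eq0 ?mulr_ge0 ?ler0n //.
  by rewrite mulf_eq0 pnatr_eq0 -[k == 0%N]negbK -lt0n k_gt0 /= => /andP [/eqP -> /eqP ->].
split; last by rewrite !inE f_max => /eqP /v_at0 [-> _].
apply/subsetP => j; case/imsetP => i; rewrite !inE => /eqP u_i0 ->.
have [i0 | i_neq0] := eqVneq i ord0.
  by move: u_i0; rewrite i0 ord_pred0 => /v_at0 [_ ->].
have i_ne0 : (i == 0%N :> nat) = false.
  by apply: contraNF i_neq0 => /eqP i0; apply/eqP/val_inj.
have f_i : f i = inord i.-1.
  by apply/val_inj; rewrite val_ord_pred i_ne0 /= inordK // (leq_ltn_trans (leq_pred _)).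
by move: u_i0; rewrite beta_mulE f_i i_ne0 => ->.
Qed.

Section ProductEigenvectors.
Variables (ks : nat -> nat) (p : nat) (rho : R).
Hypotheses (ks_gt0 : forall j, (0 < ks j)%N) (p_gt0 : (0 < p)%N) (rho_gt0 : 0 < rho).

Local Notation A := (\prod_(j < p) beta (ks j)).

Lemma beta_prod_eigenvector_full_support (y : 'cV[R]_n.+1) :
  nonnegmx y -> A *m y = rho *: y -> zero_set y != set0 -> y = 0.
Proof.
move=> y_ge0 y_eig y_zero.
pose U l := (\prod_(l <= j < p) beta (ks j)) *m y.
have U_step l : (l < p)%N -> U l = beta (ks l) *m U l.+1.
  by move=> l_lt; rewrite /U big_ltn // mulmxA.
have U_ge0 l : nonnegmx (U l).
  by apply: nonnegmx_mul y_ge0; apply: nonnegmx_prod => j _; apply: beta_ge0.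
have U_wrap : zero_set (U 0%N) = zero_set (U p).
  by rewrite /U [in RHS]big_geq // mul1mx big_mkord y_eig zero_setZ // lt0r_neq0.
pose Z t := zero_set (U (t %% p)%N).
have Z_next t : Z t.+1 = zero_set (U (t %% p)%N.+1).
  rewrite /Z modnS; case: ifP => // p_dvd; rewrite U_wrap; congr (zero_set (U _)).
  have p_dvd' : (p %| (t %% p)%N.+1)%N by rewrite /dvdn -addn1 modnDml addn1.
  apply/eqP; rewrite eqn_leq ltn_pmod //= dvdn_leq //.
have Z_beta t : Z t = zero_set (beta (ks (t %% p)%N) *m U (t %% p)%N.+1).
  by rewrite /Z -U_step // ltn_pmod.
have Z_step t : f @: Z t \subset Z t.+1 /\ (ord0 \in Z t -> f ord_max \in Z t.+1).
  by rewrite Z_next Z_beta; apply: beta_zero_set.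
have y_full : Z 0%N = setT.
  apply: (cyclic_sets_full p_gt0) => [t|t|t|].
  - by rewrite /Z modnDr.
  - exact: (Z_step t).1.
  - exact: (Z_step t).2.
  - by rewrite /Z mod0n U_wrap /U big_geq // mul1mx.
apply/colP => i; move/setP/(_ i): y_full.
by rewrite /Z mod0n U_wrap /U big_geq // mul1mx !inE mxE => /eqP.
Qed.

(* Perron's argument: [z := v - c w] vanishes at [0], and for [s := max z_i / w_i]
   the vector [s w - z] is a nonnegative eigenvector with a zero entry. *)
Lemma beta_prod_eigenvector_unique (w v : 'cV[R]_n.+1) :
  (forall i, 0 < w i 0) -> A *m w = rho *: w -> A *m v = rho *: v ->
  v = (v ord0 0 / w ord0 0) *: w.
Proof.
move=> w_gt0 w_eig v_eig.
set c := v ord0 0 / w ord0 0.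
set z := v - c *: w.
have z_eig : A *m z = rho *: z.
  by rewrite mulmxBr -scalemxAr w_eig v_eig scalerBr !scalerA mulrC.
have z0 : z ord0 0 = 0 by rewrite !mxE divfK ?subrr // lt0r_neq0.
have vE : v = z + c *: w by rewrite subrK.
clearbody z; suff z_eq0 : z = 0 by rewrite vE z_eq0 add0r.
case: (@arg_maxP _ _ _ ord0 xpredT (fun i => z i 0 / w i 0) isT) => im _ im_max.
set s := z im 0 / w im 0.
have sw_z : s *: w - z = 0.
  apply: beta_prod_eigenvector_full_support.
  - move=> i j; rewrite (ord1 j) !mxE subr_ge0.
    rewrite -[z i 0](divfK (lt0r_neq0 (w_gt0 i))) ler_wpM2r ?(ltW (w_gt0 i)) //.
    exact: im_max.
  - by rewrite mulmxBr -scalemxAr w_eig z_eig scalerBr !scalerA mulrC.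
  - by apply/set0Pn; exists im; rewrite inE !mxE /s divfK ?subrr // lt0r_neq0.
have zE : z = s *: w by apply/eqP; rewrite eq_sym -subr_eq0 sw_z.
have s0 : s = 0.
  move: z0; rewrite zE mxE => /eqP; rewrite mulf_eq0 (negbTE (lt0r_neq0 (w_gt0 ord0))).
  by rewrite orbF => /eqP.
by rewrite zE s0 scale0r.
Qed.

End ProductEigenvectors.

End BetaMatrices.

Section SelmerDynamics.
Variables (R : realType) (n : nat).
Hypothesis n_gt0 : (0 < n)%N.

Local Notation sc := (@selcoord R n).
Local Notation S := (@selmer R n).

Lemma selcoordE (x : 'rV[R]_n) (j : 'I_n) : sc x j.+1 = x 0 j.
Proof.
rewrite /selcoord; case: insubP => [k _ kE | ]; last by rewrite ltn_ord.
by have -> : k = j by apply/val_inj.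
Qed.

Lemma selcoord_selmer (x : 'rV[R]_n) j : (0 < j <= n)%N ->
  sc (S x) j = if (j < n)%N then sc x j.+1 / sc x 1
               else (1 - (selk x)%:R * sc x n) / sc x 1.
Proof.
case: j => // j /= j_lt.
by have := selcoordE (S x) (Ordinal j_lt); rewrite /= => ->; rewrite mxE.
Qed.

Lemma selcoord_antimono (x : 'rV[R]_n) i j : inB x -> (0 < i)%N -> (i <= j <= n)%N ->
  sc x j <= sc x i.
Proof.
case=> _ [x_sorted _] i_gt0.
elim: j => [|j IH] /andP [ij jn]; first by move: i_gt0 ij; lia.
case: (ltngtP i j.+1) ij => // [i_lt | ->] _ //.
apply: le_trans (IH _); first by apply: x_sorted; move: i_gt0 i_lt jn; lia.
by move: i_lt jn; lia.
Qed.

Lemma selk_bounds (x : 'rV[R]_n) : 0 < sc x n ->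
  (selk x)%:R * sc x n <= 1 /\ 1 < ((selk x)%:R + 1) * sc x n.
Proof.
move=> xn_gt0; rewrite /selk.
have /andP [k_le k_gt] := truncn_itv (divr_ge0 ler01 (ltW xn_gt0)).
split; first by move: k_le; rewrite ler_pdivlMr.
by move: k_gt; rewrite ltr_pdivrMr // -natr1.
Qed.

Lemma selk_gt0 (x : 'rV[R]_n) : inB x -> 0 < sc x n -> (0 < selk x)%N.
Proof.
move=> xB xn_gt0; rewrite /selk truncn_gt0 ler_pdivlMr // mul1r.
by apply: le_trans (proj1 xB); apply: selcoord_antimono; rewrite ?n_gt0 ?leqnn.
Qed.

Lemma selcoord1_gt0 (x : 'rV[R]_n) : inB x -> 0 < sc x n -> 0 < sc x 1.
Proof.
move=> xB xn_gt0; apply: lt_le_trans xn_gt0 _.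
by apply: selcoord_antimono; rewrite ?n_gt0 ?leqnn.
Qed.

Lemma inB_selmer (x : 'rV[R]_n) : inB x -> 0 < sc x n -> inB (S x).
Proof.
move=> xB xn_gt0.
have x1_gt0 := selcoord1_gt0 xB xn_gt0.
have [k_le k_gt] := selk_bounds xn_gt0.
have last_le : 1 - (selk x)%:R * sc x n <= sc x n by move: k_gt; rewrite mulrDl mul1r; lra.
split; [|split].
- rewrite selcoord_selmer ?n_gt0 //; case: (ltnP 1 n) => n_gt1.
    by rewrite ler_pdivrMr // mul1r; apply: selcoord_antimono.
  have -> : sc x 1 = sc x n by congr selcoord; move: n_gt1 n_gt0; lia.
  by rewrite ler_pdivrMr // mul1r.
- move=> i /andP [i_ge1 i_lt].
  rewrite !selcoord_selmer ?i_lt; try by move: i_ge1 i_lt; lia.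
  case: ifP => i1_lt; rewrite ler_pM2r ?invr_gt0 //.
    by apply: selcoord_antimono => //; move: i1_lt; lia.
  by have -> : sc x i.+1 = sc x n by congr selcoord; move: i1_lt i_lt; lia.
- rewrite selcoord_selmer ?n_gt0 ?leqnn // ltnn.
  by rewrite divr_ge0 ?subr_ge0 // ltW.
Qed.

Definition hcoord (x : 'rV[R]_n) : 'cV[R]_n.+1 :=
  \col_(i < n.+1) (if (i == 0%N :> nat) then 1 else sc x i).

Lemma hcoord_gt0 (x : 'rV[R]_n) : inB x -> 0 < sc x n -> forall i, 0 < hcoord x i 0.
Proof.
move=> xB xn_gt0 i; rewrite mxE; case: ifP => // /negbT i_neq0.
apply: lt_le_trans xn_gt0 _; apply: selcoord_antimono => //; first by rewrite lt0n.
by move: (ltn_ord i); lia.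
Qed.

Lemma hcoord_selmer (x : 'rV[R]_n) : inB x -> 0 < sc x n ->
  hcoord x = sc x 1 *: (@beta R n (selk x) *m hcoord (S x)).
Proof.
move=> xB xn_gt0.
have x1_neq0 : sc x 1 != 0 by rewrite lt0r_neq0 // selcoord1_gt0.
apply/colP => i; rewrite [RHS]mxE beta_mulE // !mxE.
case: ifP => [/eqP i0 | i_neq0].
  rewrite inordK; last by move: n_gt0; lia.
  have -> : ((@ord_max n : nat) == 0%N) = false by apply/negbTE; rewrite -lt0n.
  rewrite (@selcoord_selmer _ n) ?n_gt0 ?leqnn // ltnn.
  case: ifP => [/eqP n1 | n_neq1].
    have x1n : sc x 1 = sc x n by congr selcoord; move: n1 n_gt0; lia.
    by rewrite -x1n; field.
  rewrite selcoord_selmer ?ifT ?prednK //; try by move: n_neq1 n_gt0; lia.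
  by field.
rewrite inordK; last by move: (ltn_ord i); lia.
case: ifP => [/eqP i1 | i_neq1].
  have -> : sc x i = sc x 1 by congr selcoord; move: i1 i_neq0; lia.
  by rewrite mulr1.
rewrite selcoord_selmer ?ifT ?prednK; try by move: i_neq1 i_neq0 (ltn_ord i); lia.
by field.
Qed.

Section Orbit.
Variable x : 'rV[R]_n.
Hypotheses (xB : inB x) (orbit_pos : forall j, 0 < sc (iter j S x) n).

Lemma inB_iter j : inB (iter j S x).
Proof. by elim: j => [|j IH] //=; apply: inB_selmer. Qed.

Lemma hcoord_iter a d : exists2 c, 0 < c &
  hcoord (iter a S x) =
    c *: ((\prod_(j < d) @beta R n (selk (iter (a + j) S x))) *m hcoord (iter (a + d) S x)).
Proof.
elim: d => [|d [c c_gt0 IH]]; first by exists 1; rewrite ?big_ord0 ?scale1r ?mul1mx ?addn0.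
exists (c * sc (iter (a + d) S x) 1).
  exact: mulr_gt0 c_gt0 (selcoord1_gt0 (inB_iter _) (orbit_pos _)).
rewrite IH big_ord_recr /= (hcoord_selmer (inB_iter _) (orbit_pos _)) addnS.
by rewrite -scalemxAr scalerA -mulmxA.
Qed.

Lemma selk_iter_gt0 j : (0 < selk (iter j S x))%N.
Proof. exact: selk_gt0 (inB_iter j) (orbit_pos j). Qed.

Lemma hcoord_periodic_eigenvector m p : iter (m + p) S x = iter m S x ->
  exists2 lam, 0 < lam &
    (\prod_(j < p) @beta R n (selk (iter (m + j) S x))) *m hcoord (iter m S x) =
    lam *: hcoord (iter m S x).
Proof.
move=> x_per; have [c c_gt0 w_fix] := hcoord_iter m p; rewrite x_per in w_fix.
exists c^-1; first by rewrite invr_gt0.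
by rewrite {2}w_fix scalerA mulVf ?scale1r ?lt0r_neq0.
Qed.

End Orbit.

End SelmerDynamics.

(* [beta] over [rat], which is not a [realType]. *)
Definition betaQ (n k : nat) : 'M[rat]_n.+1 :=
  \matrix_(i < n.+1, j < n.+1)
    (if (i == 0%N :> nat) && (j == n.-1 :> nat) then k%:R
     else if (i == 0%N :> nat) && (j == n :> nat) then 1
     else if (i == j.+1 :> nat) then 1 else 0).

Lemma beta_prod_ratr (R : realType) n d (ks : 'I_d -> nat) :
  \prod_(j < d) @beta R n (ks j) = map_mx ratr (\prod_(j < d) betaQ n (ks j)).
Proof.
rewrite (big_morph (map_mx (ratr : rat -> R)) (@map_mxM _ _ _ _ _ _) (@map_mx1 _ _ _ _)).
apply: eq_bigr => j _.
by apply/matrixP => i l; rewrite !mxE; repeat case: ifP => _; rewrite ?rmorph_nat ?rmorph1 ?rmorph0.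
Qed.

Unset Implicit Arguments. Set Strict Implicit. Set Printing Implicit Defensive.

Theorem mainTheorem6 (R : realType) (n : nat) (x : 'rV[R]_n) (m p : nat)
  (rho0 : R) :
  (0 < n)%N ->
  inB x ->
  (forall j : nat, 0 < selcoord (iter j (@selmer R n) x) n) ->
  (0 < p)%N ->
  iter (m + p) (@selmer R n) x = iter m (@selmer R n) x ->
  let betap : 'M[R]_n.+1 :=
    \prod_(j < p) @beta R n (selk (iter (m + j) (@selmer R n) x)) in
  eigenvalue betap rho0 ->
  (forall lambda : R[i],
      eigenvalue (map_mx (fun r : R => r%:C%C) betap) lambda ->
      `|lambda| <= rho0%:C%C) ->
  (forall i : nat, (1 <= i <= n)%N ->
     exists P Q : {poly rat},
       (map_poly ratr Q).[rho0] != 0 /\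
       selcoord x i = (map_poly ratr P).[rho0] / (map_poly ratr Q).[rho0])
  /\
  (exists q : {poly rat}, q != 0 /\ (size q <= n.+2)%N /\
     root (map_poly ratr q) rho0).
Proof.
move=> n_gt0 xB x_pos p_gt0 x_per betap rho_eig rho_max.
pose AQ := \prod_(j < p) betaQ n (selk (iter (m + j) (@selmer R n) x)).
have betapE : betap = map_mx ratr AQ by rewrite /betap beta_prod_ratr.
split; last first.
  exists (char_poly AQ); split; first exact: monic_neq0 (char_poly_monic _).
  by rewrite size_char_poly map_char_poly -betapE -eigenvalue_root_char.
pose w := hcoord (iter m (@selmer R n) x).
have w_gt0 := hcoord_gt0 n_gt0 (inB_iter n_gt0 xB x_pos m) (x_pos m).
have w0 : w ord0 0 = 1 by rewrite mxE.
have [lam lam_gt0 w_eig] := hcoord_periodic_eigenvector n_gt0 xB x_pos x_per.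
have betap_ge0 : nonnegmx betap by apply: nonnegmx_prod => j _; apply: beta_ge0.
have rhoE := positive_eigenvalue_eq_spectral_radius betap_ge0 w_gt0 w_eig rho_eig rho_max.
have w_line v : betap *m v = rho0 *: v -> v = v ord0 0 *: w.
  rewrite rhoE => v_eig; rewrite {1}(beta_prod_eigenvector_unique n_gt0
    (fun j => selk_iter_gt0 n_gt0 xB x_pos (m + j)) p_gt0 lam_gt0 w_gt0 w_eig v_eig).
  by rewrite w0 divr1.
rewrite -/betap betapE -rhoE in w_eig; rewrite betapE in rho_eig w_line.
have [P [P0 wP]] := eigenvector_poly_eigenvalue rho_eig w_eig w0 w_line.
have [d _ xE] := hcoord_iter n_gt0 xB x_pos 0 m.
rewrite add0n beta_prod_ratr wP -scalemxAr mul_map_mx_horner scalerA /= in xE.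
have x0 : hcoord x ord0 0 = 1 by rewrite mxE.
have [Q0 xQ] := scale_first_coord1 xE x0.
move=> i /andP [i_ge1 i_le]; set P' := _ *m P in Q0 xQ.
exists (P' (inord i) 0), (P' ord0 0); split; first by rewrite mxE in Q0.
have i_neq0 : (i == 0%N) = false by rewrite eqn0Ngt i_ge1.
move/colP/(_ (inord i)): xQ; rewrite !mxE inordK ?i_neq0 => [->|]; last by rewrite ltnS.
by rewrite mulrC.
Qed.
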